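(* Let $\ell\in\mathbb{Z}_{\ge 2}$, let $b_{n,m}=b_{n,m}(\ell)$ be as in the context, and let $R_{\ell-j}(x)$, $2\le j\le\ell$, be the rational functions defined by $R_{\ell-2}(x)=1$, $R_{\ell-3}(x)=x^{-1}$, $R_{\ell-j}(x)=x^{-1}R_{\ell-j+1}(x)-R_{\ell-j+2}(x)$ for $j>3$. Then for $2\le j\le \ell$ we have $R_{\ell-j}(x)=U_{j-2}\big(\tfrac{1}{2x}\big)$, and consequently $$\sum_{\substack{m\ge0,\ m\equiv \ell-j\bmod\ell\\ n\ge \ell-j}} b_{n,m}x^n \;=\; U_{j-2}\big(\tfrac{1}{2x}\big)\sum_{\substack{m\ge0,\ m\equiv \ell-2\bmod\ell\\ n\ge \ell-2}} b_{n,m}x^n .$$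
   Context: $U_j$ denotes the $j$th Chebyshev polynomial of the second kind: $U_0(x)=1$, $U_1(x)=2x$, $U_j(x)=2xU_{j-1}(x)-U_{j-2}(x)$ for $j\ge 2$. For $n,m\in\mathbb{Z}_{\ge 0}$, $a_{n,m}$ is the number of unit step paths $(x_0,\dots,x_n)$ on $\mathbb{Z}_{\ge0}$ (integers $x_i\ge0$, $|x_i-x_{i-1}|=1$) with $x_0=0$, $x_n=m$. For fixed $\ell\in\mathbb{Z}_{\ge2}$, $b_{n,m}=b_{n,m}(\ell)$ is defined by: $b_{n,m}=a_{n,m}$ if $m\equiv-1\pmod\ell$; $b_{n,m}=b_{n-1,m-1}+b_{n-1,m+1}$ if $m\equiv m_0\pmod\ell$ with $0\le m_0<\ell-2$; $b_{n,m}=b_{n-1,m-1}$ if $m\equiv-2\pmod\ell$; the recursion is used for $n\ge1$ with $b_{0,0}=1$, $b_{0,m}=0$ for $m>0$, and $b_{n,-1}=0$. Identities are of formal power series in $x$. *)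

From HB Require Import structures.
From mathcomp Require Import all_boot all_order all_algebra fraction.
Set Implicit Arguments. Unset Strict Implicit. Unset Printing Implicit Defensive.
Import Order.TTheory GRing.Theory Num.Theory.
Local Open Scope ring_scope.

Fixpoint chebU (R : nzRingType) (n : nat) : {poly R} :=
  match n with
  | 0 => 1
  | (p.+1 as q).+1 => 2%:P * 'X * chebU R q - chebU R p
  | 1 => 2%:P * 'X
  end.

(* a_{n,m}: number of unit-step paths (x_0,...,x_n) on Z_{>=0} with x_0 = 0,
   x_n = m.  A path of length n starting at 0 takes values in {0,...,n}, so
   such paths are exactly the functions 'I_(n+1) -> 'I_(n+1) below. *)
Definition step_ok n (t : {ffun 'I_n.+1 -> 'I_n.+1}) (i : 'I_n) : bool :=
  let u := nat_of_ord (t (widen_ord (leqnSn n) i)) in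
  let v := nat_of_ord (t (lift ord0 i)) in
  (v == u.+1) || (u == v.+1).

Definition apath (n m : nat) : nat :=
  #|[pred t : {ffun 'I_n.+1 -> 'I_n.+1} |
      [&& nat_of_ord (t ord0) == 0%N, nat_of_ord (t ord_max) == m
        & [forall i : 'I_n, step_ok t i]]]|.

(* b_{n,m}(l) as in the paper (with b_{n,-1} = 0). *)
Fixpoint bnm (l n m : nat) {struct n} : nat :=
  match n with
  | 0 => (m == 0)%N : nat
  | n'.+1 =>
      if (m %% l == l - 1)%N then apath n m
      else if (m %% l == l - 2)%N then
        (if m is m'.+1 then bnm l n' m' else 0%N)
      else ((if m is m'.+1 then bnm l n' m' else 0%N) + bnm l n' m.+1)%N
  end.

(* Coefficient of x^n in  sum_{m >= 0, m = r mod l, n >= r} b_{n,m} x^n.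
   Since b_{n,m} = 0 for m > n, the inner sum over m is over m <= n. *)
Definition Fcoef (l r n : nat) : rat :=
  if (r <= n)%N then
    (\sum_(m < n.+1 | (m %% l == r %% l)%N) bnm l n m)%:R
  else 0.

Definition zext (f : nat -> rat) (N : int) : rat :=
  match N with Posz n => f n | Negz _ => 0 end.

(* Coefficient of x^N in  p(x^{-1}) * f(x), where p is a polynomial
   (so p(x^{-1}) is a Laurent polynomial in x^{-1}) and f a formal
   Laurent series given by its coefficients. *)
Definition laurent_mul (p : {poly rat}) (f : int -> rat) (N : int) : rat :=
  \sum_(k < size p) p`_k * f (N + (k : int)).

(* The rational functions R_{l-j}, indexed by k = j - 2:
   Rfun 0 = R_{l-2} = 1, Rfun 1 = R_{l-3} = x^{-1},
   Rfun (k+2) = x^{-1} Rfun (k+1) - Rfun k. *)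
Definition xF : {fraction {poly rat}} := FracField.tofrac ('X : {poly rat}).

Fixpoint Rfun (k : nat) : {fraction {poly rat}} :=
  match k with
  | 0 => 1
  | (p.+1 as q).+1 => xF^-1 * Rfun q - Rfun p
  | 1 => xF^-1
  end.

(* Both identities come from two-term recurrences.  R_{l-j} and U_{j-2}(1/(2x))
   satisfy the same recurrence with the same initial values.  For the series
   F_r := sum_{m = r mod l, n >= r} b_{n,m} x^n, the recursion defining b gives
   F_r = x (F_{r-1} + F_{r+1}) for 0 < r < l-2 and F_{l-2} = x F_{l-3}.  Read
   as F_{r-1} = x^{-1} F_r - F_{r+1}, this is the Chebyshev recurrence in the
   variable x^{-1}/2, so F_{l-j} = P(x^{-1}) F_{l-2} with P := U_{j-2}(X/2). *)

From mathcomp Require Import all_boot all_order all_algebra fraction.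
From mathcomp Require Import zify.
Import GRing.Theory.

Lemma nat_ind2 (P : nat -> Prop) :
  P 0%N -> P 1%N -> (forall k, P k -> P k.+1 -> P k.+2) -> forall k, P k.
Proof.
move=> P0 P1 PSS k; suff [] : P k /\ P k.+1 by [].
by elim: k => [|k [IHk IHk1]]; split; last exact: PSS.
Qed.

Lemma eqn_modS l s i : 0 < s < l -> (i.+1 %% l == s) = (i %% l == s.-1).
Proof.
case: s => // s /= lt_s_l.
rewrite -[s.+1](modn_small lt_s_l) -[s in RHS](modn_small (ltnW lt_s_l)).
by rewrite -addn1 -(addn1 s) eqn_modDr.
Qed.

Lemma big_mod_recl l s B (F : nat -> nat) : 0 < s < l ->
  \sum_(m < B.+1 | m %% l == s) F m = \sum_(i < B | i %% l == s.-1) F i.+1.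
Proof.
move=> s_in; rewrite big_mkcond big_ord_recl /= mod0n.
have /negbTE -> : 0 != s by case: s s_in.
rewrite add0n [RHS]big_mkcond; apply: eq_bigr => i _.
by rewrite /bump add1n eqn_modS.
Qed.

Lemma apath_eq0 n m : n < m -> apath n m = 0.
Proof.
move=> lt_n_m; apply: eq_card0 => t; rewrite !inE.
have /negbTE -> : nat_of_ord (t ord_max) != m.
  by rewrite neq_ltn (leq_trans (ltn_ord _)).
by rewrite andbF.
Qed.

Lemma bnm_eq0 l n m : n < m -> bnm l n m = 0.
Proof.
elim: n m => [|n IHn] [|m] //= lt_n_m.
by rewrite apath_eq0 // !IHn ?addn0 ?if_same //; lia.
Qed.

Definition bnm_class l r n := \sum_(m < n.+1 | m %% l == r) bnm l n m.

Lemma bnm_class_widen l r n B : n < B ->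
  \sum_(m < B | m %% l == r) bnm l n m = bnm_class l r n.
Proof.
move=> lt_n_B; rewrite /bnm_class.
rewrite (big_ord_widen_cond B (fun m => m %% l == r) (bnm l n) lt_n_B).
rewrite [RHS]big_mkcondr; apply: eq_bigr => m _.
by case: ltnP => // le_m_n; rewrite bnm_eq0.
Qed.

Lemma bnmS_inner l n m : m.+1 %% l != l - 1 -> m.+1 %% l != l - 2 ->
  bnm l n.+1 m.+1 = bnm l n m + bnm l n m.+2.
Proof. by move=> /negbTE ne_l1 /negbTE ne_l2; rewrite /= ne_l1 ne_l2. Qed.

Lemma bnmS_edge l n m : 1 < l -> m.+1 %% l == l - 2 -> bnm l n.+1 m.+1 = bnm l n m.
Proof.
move=> l_gt1 /eqP eq_l2; rewrite /= eq_l2 eqxx.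
by have /negbTE -> : l - 2 != l - 1 by lia.
Qed.

Lemma bnm_class_succ l r n : 0 < r -> r.+2 < l ->
  bnm_class l r n.+1 = bnm_class l r.-1 n + bnm_class l r.+1 n.
Proof.
move=> r_gt0 lt_r2_l.
have r_in : 0 < r < l by lia.
have r1_in : 0 < r.+1 < l by lia.
rewrite -(@bnm_class_widen l r.+1 n n.+3 (leqW (leqW (ltnSn n)))) /bnm_class.
rewrite (big_mod_recl l r.+1 n.+2 (bnm l n) r1_in).
rewrite (big_mod_recl l r n.+1 (bnm l n.+1) r_in).
rewrite (big_mod_recl l r n.+1 (bnm l n \o succn) r_in) -big_split.
apply: eq_bigr => i; rewrite -eqn_modS // => /eqP mod_i1.
by rewrite bnmS_inner ?mod_i1 //; lia.
Qed.

Lemma bnm_class_succ_edge l n : 2 < l -> bnm_class l (l - 2) n.+1 = bnm_class l (l - 3) n.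
Proof.
move=> l_gt2; have l2_in : 0 < l - 2 < l by lia.
rewrite /bnm_class (big_mod_recl l (l - 2) n.+1 (bnm l n.+1) l2_in).
rewrite (_ : (l - 2).-1 = l - 3); last by lia.
apply: eq_bigr => i mod_i; rewrite bnmS_edge ?eqn_modS //; lia.
Qed.

Local Open Scope ring_scope.

Lemma chebU_SS (R : nzRingType) k :
  chebU R k.+2 = 2%:P * 'X * chebU R k.+1 - chebU R k.
Proof. by []. Qed.

Lemma map_chebU (R S : nzRingType) (f : {rmorphism R -> S}) k :
  map_poly f (chebU R k) = chebU S k.
Proof.
elim/nat_ind2: k => [||k IHk IHk1]; first by rewrite rmorph1.
  by rewrite /= rmorphM /= map_polyX map_polyC /= rmorph_nat.
by rewrite !chebU_SS rmorphB !rmorphM /= IHk IHk1 map_polyX map_polyC /= rmorph_nat.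
Qed.

Lemma horner_chebU_SS (R : comNzRingType) k (a : R) :
  (chebU R k.+2).[a] = 2 * a * (chebU R k.+1).[a] - (chebU R k).[a].
Proof. by rewrite chebU_SS !hornerE. Qed.

Lemma Rfun_chebU k : Rfun k = (chebU _ k).[(2%:R * xF)^-1].
Proof.
have two_neq0 : 2%:R != 0 :> {fraction {poly rat}}.
  by rewrite -(rmorph_nat (@FracField.tofrac _) 2) tofrac_eq0 -polyC_natr polyC_eq0.
have twice_a : 2 * (2%:R * xF)^-1 = xF^-1.
  by rewrite invfM mulrA divff ?mul1r.
elim/nat_ind2: k => [||k IHk IHk1]; first by rewrite hornerE.
  by rewrite /= !hornerE twice_a.
by rewrite horner_chebU_SS -IHk -IHk1 twice_a.
Qed.

Lemma laurent_mul_widen (p : {poly rat}) f N n : (size p <= n)%N ->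
  laurent_mul p f N = \sum_(k < n) p`_k * f (N + (k : int)).
Proof.
move=> le_p_n; rewrite /laurent_mul.
rewrite (big_ord_widen n (fun k => p`_k * f (N + (k : int)))) // big_mkcond /=.
apply: eq_bigr => k _; case: ltnP => // /(nth_default 0) ->.
by rewrite mul0r.
Qed.

Lemma laurent_mul1 f N : laurent_mul 1 f N = f N.
Proof. by rewrite /laurent_mul size_poly1 big_ord1 coef1 mul1r addr0. Qed.

Lemma laurent_mulB (p q : {poly rat}) f N :
  laurent_mul (p - q) f N = laurent_mul p f N - laurent_mul q f N.
Proof.
pose n := maxn (size p) (size q).
have le_pq_n : (size (p - q)%R <= n)%N.
  by rewrite (leq_trans (size_polyD _ _)) ?size_polyN.
rewrite !(laurent_mul_widen _ _ _ n) ?leq_maxl ?leq_maxr // -sumrB.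
by apply: eq_bigr => k _; rewrite coefB mulrBl.
Qed.

Lemma laurent_mulX (p : {poly rat}) f N :
  laurent_mul (p * 'X) f N = laurent_mul p f (N + 1).
Proof.
have le_pX : (size (p * 'X)%R <= (size p).+1)%N.
  by rewrite (leq_trans (size_polyMleq _ _)) // size_polyX addn2.
rewrite (laurent_mul_widen _ _ _ _ le_pX) big_ord_recl coefMX mul0r add0r.
by apply: eq_bigr => k _; rewrite coefMX /= -addrA; congr (_ * f (N + _)).
Qed.

Section ChebyshevHalfX.

Variable R : fieldType.
Hypothesis two_neq0 : 2%:R != 0 :> R.

Lemma twice_halfX : 2%:P * ((2%:R)^-1 *: 'X) = 'X :> {poly R}.
Proof. by rewrite -mul_polyC mulrA -polyCM divff // mul1r. Qed.

Lemma chebU_halfX_1 : chebU R 1 \Po ((2%:R)^-1 *: 'X) = 'X.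
Proof. by rewrite /= comp_polyM comp_polyC comp_polyX twice_halfX. Qed.

Lemma chebU_halfX_SS k :
  chebU R k.+2 \Po ((2%:R)^-1 *: 'X) =
  (chebU R k.+1 \Po ((2%:R)^-1 *: 'X)) * 'X - (chebU R k \Po ((2%:R)^-1 *: 'X)).
Proof.
by rewrite chebU_SS comp_polyB !comp_polyM comp_polyC comp_polyX twice_halfX (mulrC 'X).
Qed.

End ChebyshevHalfX.

Section ChebyshevLaurent.

Variables (g : nat -> int -> rat) (K : nat).
Hypothesis g_1 : (0 < K)%N -> forall N, g 0%N (N + 1) = g 1%N N.
Hypothesis g_SS : forall k N, (k.+2 <= K)%N -> g k.+1 (N + 1) = g k.+2 N + g k N.

Lemma chebU_laurent_solution k : (k <= K)%N ->
  forall N, g k N = laurent_mul (chebU rat k \Po ((2%:R)^-1 *: 'X)) (g 0%N) N.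
Proof.
elim/nat_ind2: k => [||k IHk IHk1] le_k_K N.
- by rewrite /= comp_polyC laurent_mul1.
- by rewrite chebU_halfX_1 // -[X in laurent_mul X]mul1r laurent_mulX laurent_mul1 g_1.
have lt_k_K : (k < K)%N := ltnW le_k_K.
rewrite chebU_halfX_SS // laurent_mulB laurent_mulX -(IHk1 lt_k_K) -(IHk (ltnW lt_k_K)).
by rewrite g_SS // addrK.
Qed.

End ChebyshevLaurent.

Lemma FcoefE l r n : (r < l)%N -> Fcoef l r n = (bnm_class l r n)%:R.
Proof.
move=> lt_r_l; rewrite /Fcoef modn_small //; case: leqP => // lt_n_r.
rewrite /bnm_class big1 // => m /eqP mod_m.
by have := leq_mod m l; have := ltn_ord m; lia.
Qed.

Lemma Fcoef0 l r : (0 < r)%N -> Fcoef l r 0 = 0.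
Proof. by rewrite /Fcoef leqn0 => /lt0n_neq0/negbTE ->. Qed.

Lemma Fcoef_succ l r n : (0 < r)%N -> (r.+2 < l)%N ->
  Fcoef l r n.+1 = Fcoef l r.-1 n + Fcoef l r.+1 n.
Proof. by move=> r_gt0 lt_r2_l; rewrite !FcoefE ?bnm_class_succ ?natrD //; lia. Qed.

Lemma Fcoef_succ_edge l n : (2 < l)%N -> Fcoef l (l - 2) n.+1 = Fcoef l (l - 3) n.
Proof. by move=> l_gt2; rewrite !FcoefE ?bnm_class_succ_edge //; lia. Qed.

Lemma zext_shift (f g : nat -> rat) N : f 0%N = 0 -> (forall n, f n.+1 = g n) ->
  zext f (N + 1) = zext g N.
Proof. by move=> f0 fS; case: N => [n|[|k]] //=; rewrite addn1. Qed.

Lemma zextD (f g : nat -> rat) N : zext (fun n => f n + g n) N = zext f N + zext g N.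
Proof. by case: N => //= _; rewrite addr0. Qed.

Lemma zext_Fcoef_succ l r N : (0 < r)%N -> (r.+2 < l)%N ->
  zext (Fcoef l r) (N + 1) = zext (Fcoef l r.-1) N + zext (Fcoef l r.+1) N.
Proof.
move=> r_gt0 lt_r2_l; rewrite -zextD.
by apply: zext_shift => [|n]; [exact: Fcoef0 | exact: Fcoef_succ].
Qed.

Lemma zext_Fcoef_succ_edge l N : (2 < l)%N ->
  zext (Fcoef l (l - 2)) (N + 1) = zext (Fcoef l (l - 3)) N.
Proof.
move=> l_gt2; apply: zext_shift => [|n]; last exact: Fcoef_succ_edge.
by apply: Fcoef0; lia.
Qed.

Theorem lemma2p9 (l j : nat) (hl : (2 <= l)%N) (hj2 : (2 <= j)%N) (hjl : (j <= l)%N) :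
  Rfun (j - 2) = (map_poly (@FracField.tofrac _) (chebU _ (j - 2))).[(2%:R * xF)^-1]
  /\
  (forall N : int,
     zext (Fcoef l (l - j)) N =
     laurent_mul (chebU rat (j - 2) \Po ((2%:R)^-1 *: 'X)) (zext (Fcoef l (l - 2))) N).
Proof.
split; first by rewrite map_chebU Rfun_chebU.
pose g k := zext (Fcoef l (l - 2 - k)).
have g_1 : (0 < l - 2)%N -> forall N, g 0%N (N + 1) = g 1%N N.
  move=> l_gt2 N; rewrite /g subn0 zext_Fcoef_succ_edge; last by lia.
  by have -> : (l - 2 - 1 = l - 3)%N by lia.
have g_SS k N : (k.+2 <= l - 2)%N -> g k.+1 (N + 1) = g k.+2 N + g k N.
  move=> le_k2; rewrite /g zext_Fcoef_succ; try lia.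
  have -> : ((l - 2 - k.+1).-1 = l - 2 - k.+2)%N by lia.
  by have -> : ((l - 2 - k.+1).+1 = l - 2 - k)%N by lia.
have le_j2 : (j - 2 <= l - 2)%N by lia.
move=> N; have -> : (l - j = l - 2 - (j - 2))%N by lia.
by have := @chebU_laurent_solution g (l - 2) g_1 g_SS _ le_j2 N; rewrite /g subn0.
Qed.
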